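(* In the setting of the context (with $p>L$), for all $x\in X$, $y\in Y$, $z\in\mathbb{R}^n$ we have $\phi(x,y,z)\ge\underline{f}$.
   Context: $X\subseteq\mathbb{R}^n$ nonempty closed convex, $Y\subseteq\mathbb{R}^m$ nonempty closed convex compact, $f$ continuously differentiable with $f(x,\cdot)$ concave, $\nabla_xf,\nabla_yf$ $L$-Lipschitz, and $\psi(x)=\max_{y\in Y}f(x,y)\ge\underline{f}$ for all $x\in X$, with $\underline{f}$ finite. $K(x,z;y)=f(x,y)+\frac p2\|x-z\|^2$; $d(y,z)=\min_{x\in X}K(x,z;y)$; $P(z)=\min_{x\in X}\max_{y\in Y}K(x,z;y)$; $\phi(x,y,z)=K(x,z;y)-2d(y,z)+2P(z)$. *)

From HB Require Import structures.
From mathcomp Require Import all_boot all_order all_algebra.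
From mathcomp Require Import all_classical all_reals all_analysis.
Set Implicit Arguments. Unset Strict Implicit. Unset Printing Implicit Defensive.
Import Order.TTheory GRing.Theory Num.Theory.
Import numFieldNormedType.Exports.
Local Open Scope classical_set_scope.
Local Open Scope ring_scope.

Section Defs.
Variable R : realType.

Definition sqnorm {k : nat} (v : 'rV[R]_k) : R := \sum_(i < k) (v 0 i) ^+ 2.
Definition enorm {k : nat} (v : 'rV[R]_k) : R := Num.sqrt (sqnorm v).

Definition convexR {k : nat} (A : set 'rV[R]_k) : Prop :=
  forall a b t, A a -> A b -> 0 <= t -> t <= 1 -> A (t *: a + (1 - t) *: b).

Definition gradx {n m : nat} (f : 'rV[R]_n -> 'rV[R]_m -> R) x y : 'rV[R]_n :=
  \row_(i < n) 'D_(delta_mx 0 i) (fun x' => f x' y) x.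
Definition grady {n m : nat} (f : 'rV[R]_n -> 'rV[R]_m -> R) x y : 'rV[R]_m :=
  \row_(j < m) 'D_(delta_mx 0 j) (fun y' => f x y') y.

Definition Kf {n m : nat} (f : 'rV[R]_n -> 'rV[R]_m -> R) (p : R) x z y : R :=
  f x y + p / 2 * sqnorm (x - z).

Definition dfun {n m : nat} (f : 'rV[R]_n -> 'rV[R]_m -> R) (p : R)
  (X : set 'rV[R]_n) y z : R := inf [set Kf f p x z y | x in X].

Definition Pfun {n m : nat} (f : 'rV[R]_n -> 'rV[R]_m -> R) (p : R)
  (X : set 'rV[R]_n) (Y : set 'rV[R]_m) z : R :=
  inf [set sup [set Kf f p x z y | y in Y] | x in X].

Definition phifun {n m : nat} (f : 'rV[R]_n -> 'rV[R]_m -> R) (p : R)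
  (X : set 'rV[R]_n) (Y : set 'rV[R]_m) x y z : R :=
  Kf f p x z y - 2 * dfun f p X y z + 2 * Pfun f p X Y z.

End Defs.

From Pilot Require Import Defs.
From HB Require Import structures.
From mathcomp Require Import all_boot all_order all_algebra.
From mathcomp Require Import all_classical all_reals all_analysis.
Import Order.TTheory GRing.Theory Num.Theory.
Import numFieldNormedType.Exports.
From mathcomp Require Import ring lra.
Set Implicit Arguments. Unset Strict Implicit. Unset Printing Implicit Defensive.
Local Open Scope classical_set_scope.
Local Open Scope ring_scope.

(* Since d(y,z) <= K(x,z;y) and d(y,z) <= P(z),
     phi(x,y,z) = (K(x,z;y) - d(y,z)) + (P(z) - d(y,z)) + P(z) >= P(z),
   and P(z) >= inf_X psi >= flow because the proximal term is nonnegative.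
   The content lies in making these inf/sup meaningful (inf and sup of sets
   that are not bounded are junk values): the sup over Y is finite by
   compactness, and K(., z; y) is bounded below on X because the descent lemma
   f(x,y) >= f(z,y) + <grad_x f(z,y), x - z> - L/2 |x - z|^2 gives, for p > L,
     K(x,z;y) >= f(z,y) - |grad_x f(z,y)|^2 / (2 (p - L)). *)

Section Euclid.
Variables (R : realType) (k : nat).
Implicit Types (u v w : 'rV[R]_k) (a : R).

Definition dotv u v : R := \sum_(i < k) u 0 i * v 0 i.

Lemma dotvBr u v w : dotv u (v - w) = dotv u v - dotv u w.
Proof. by rewrite /dotv -sumrB; apply: eq_bigr => i _; rewrite !mxE mulrBr. Qed.

Lemma sqnorm_ge0 u : 0 <= sqnorm u.
Proof. by apply: sumr_ge0 => i _; exact: sqr_ge0. Qed.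

Lemma sqnorm0 : sqnorm (0 : 'rV[R]_k) = 0.
Proof. by rewrite /sqnorm big1 // => i _; rewrite mxE expr0n. Qed.

Lemma sqnormZ a u : sqnorm (a *: u) = a ^+ 2 * sqnorm u.
Proof. by rewrite /sqnorm mulr_sumr; apply: eq_bigr => i _; rewrite mxE exprMn. Qed.

Lemma sqnorm_scaleD a u v :
  sqnorm (a *: u + v) = a ^+ 2 * sqnorm u + 2 * a * dotv u v + sqnorm v.
Proof.
rewrite /sqnorm /dotv !mulr_sumr -!big_split /=.
by apply: eq_bigr => i _; rewrite !mxE; ring.
Qed.

Lemma enorm_ge0 u : 0 <= enorm u.
Proof. exact: sqrtr_ge0. Qed.

Lemma sqr_enorm u : enorm u ^+ 2 = sqnorm u.
Proof. by rewrite sqr_sqrtr // sqnorm_ge0. Qed.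

Lemma enormZ a u : enorm (a *: u) = `|a| * enorm u.
Proof. by rewrite /enorm sqnormZ sqrtrM ?sqr_ge0 // sqrtr_sqr. Qed.

Lemma dotv_sqr_le u v : dotv u v ^+ 2 <= sqnorm u * sqnorm v.
Proof.
have [u0|] := eqVneq (sqnorm u) 0.
  have ui i : u 0 i = 0.
    have /eqP := psumr_eq0P (fun j _ => sqr_ge0 (u 0 j)) u0 (i := i) isT.
    by rewrite sqrf_eq0 => /eqP.
  by rewrite /dotv big1 ?expr0n ?u0 ?mul0r // => i _; rewrite ui mul0r.
rewrite neq_lt ltNge sqnorm_ge0 /= => u_gt0.
(* the quadratic t |-> sqnorm (t u + v) is nonnegative at its minimum *)
have := sqnorm_ge0 ((- dotv u v / sqnorm u) *: u + v).
rewrite sqnorm_scaleD -(pmulr_rge0 _ u_gt0).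
set A := sqnorm u; set C := dotv u v.
have -> : A * ((- C / A) ^+ 2 * A + 2 * (- C / A) * C + sqnorm v)
          = A * sqnorm v - C ^+ 2 by field; rewrite gt_eqF.
lra.
Qed.

Lemma dotv_lbound u v : - (enorm u * enorm v) <= dotv u v.
Proof.
have : `|dotv u v| <= enorm u * enorm v.
  rewrite -sqrtrM ?sqnorm_ge0 // -sqrtr_sqr ler_sqrt ?dotv_sqr_le //.
  by rewrite mulr_ge0 ?sqnorm_ge0.
by rewrite ler_norml => /andP[].
Qed.

End Euclid.

Section Gradient.
Variables (R : realType) (k : nat) (g : 'rV[R]_k -> R).

Definition grad (w : 'rV[R]_k) : 'rV[R]_k := \row_(i < k) 'D_(delta_mx 0 i) g w.

Lemma is_derive_line (z v : 'rV[R]_k) (t : R) :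
  derivable g (z + t *: v) v ->
  is_derive t 1 (fun s : R => g (z + s *: v)) ('D_v g (z + t *: v)).
Proof.
move=> dg.
have quotE : (fun h : R => h^-1 *: (((fun s => g (z + s *: v)) \o shift t) (h *: 1)
                                 - g (z + t *: v)))
       = (fun h : R => h^-1 *: ((g \o shift (z + t *: v)) (h *: v) - g (z + t *: v))).
  by apply/funext => h /=; rewrite scaler1 scalerDl addrCA.
by split; [rewrite /derivable quotE | rewrite /derive quotE].
Qed.

Lemma deriveE_grad (w v : 'rV[R]_k) :
  differentiable g w -> 'D_v g w = dotv v (grad w).
Proof.
move=> dg; rewrite deriveE // {1}(row_sum_delta v) linear_sum.
by apply: eq_bigr => i _; rewrite linearZ -deriveE // mxE.
Qed.

Variable L : R.
Hypothesis g_diff : forall w, differentiable g w.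
Hypothesis grad_lip : forall w1 w2, enorm (grad w1 - grad w2) <= L * enorm (w1 - w2).

Lemma descent_lemma (z v : 'rV[R]_k) :
  g z + dotv v (grad z) - L / 2 * sqnorm v <= g (z + v).
Proof.
pose G t := dotv v (grad (z + t *: v)).
pose c := L / 2 * sqnorm v.
pose line s := g (z + s *: v).
have dh (t : R) : is_derive t (1 : R) line (G t).
  by apply: is_derive_eq; [exact/is_derive_line/diff_derivable | exact: deriveE_grad].
(* subtracting the tangent and adding c t^2 makes the slope nonnegative on [0, 1] *)
pose h : R -> R := line - G 0 \*: id + c \*: id ^+ 2.
have dk (t : R) : is_derive t (1 : R) h (G t - G 0 + 2 * c * t).
  apply: (is_derive_eq (is_deriveD
    (is_deriveB (dh t) (is_deriveZ (G 0) (is_derive_id t 1)))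
    (is_deriveZ c (is_deriveX 2 (is_derive_id t 1))))).
  by rewrite /GRing.scale /=; ring.
have h_cont : {within `[0, 1], continuous h}.
  by apply: derivable_within_continuous => t _; case: (dk t).
have [t /[!in_itv] /= /andP[t_gt0 _] Eh] := MVT ltr01 (fun t _ => dk t) h_cont.
have G0 : G 0 = dotv v (grad z) by rewrite /G scale0r addr0.
have G_slope : dotv v (grad z) - L * t * sqnorm v <= G t.
  have := dotv_lbound v (grad (z + t *: v) - grad z).
  have := grad_lip (z + t *: v) z.
  rewrite /G dotvBr addrAC subrr add0r enormZ ger0_norm ?(ltW t_gt0) //.
  move=> /(ler_wpM2l (enorm_ge0 v)).
  rewrite -sqr_enorm; nra.
have hE s : h s = line s - G 0 * s + c * s ^+ 2 by [].
move: Eh; rewrite !hE /line scale0r scale1r addr0 G0 /c; lra.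
Qed.

End Gradient.

Lemma differentiable_sectionl (R : realType) (U V W : normedModType R)
    (F : U * V -> W) (x : U) (y : V) :
  differentiable F (x, y) -> differentiable (fun x' => F (x', y)) x.
Proof. by move=> dF; apply: differentiable_comp => //; exact: differentiable_pair. Qed.

Lemma differentiable_sectionr (R : realType) (U V W : normedModType R)
    (F : U * V -> W) (x : U) (y : V) :
  differentiable F (x, y) -> differentiable (fun y' => F (x, y')) y.
Proof. by move=> dF; apply: differentiable_comp => //; exact: differentiable_pair. Qed.

Lemma quadratic_lbound (R : realFieldType) (q e s : R) :
  0 < q -> - (e ^+ 2 / (2 * q)) <= q / 2 * s ^+ 2 - e * s.
Proof.
move=> q_gt0.
have -> : q / 2 * s ^+ 2 - e * s = q / 2 * (s - e / q) ^+ 2 - e ^+ 2 / (2 * q).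
  by field; rewrite gt_eqF.
have : 0 <= q / 2 * (s - e / q) ^+ 2 by rewrite mulr_ge0 ?sqr_ge0 ?divr_ge0 ?ltW.
lra.
Qed.

Section Proximal.
Variables (R : realType) (n m : nat) (f : 'rV[R]_n -> 'rV[R]_m -> R) (L p : R).
Hypothesis fx_diff : forall x y, differentiable (f ^~ y) x.
Hypothesis gradx_lip :
  forall x1 x2 y, enorm (gradx f x1 y - gradx f x2 y) <= L * enorm (x1 - x2).
Hypothesis L_lt_p : L < p.

Lemma Kf_lbound x y z :
  f z y - enorm (gradx f z y) ^+ 2 / (2 * (p - L)) <= Kf f p x z y.
Proof.
have := descent_lemma (fx_diff ^~ y) (fun x1 x2 => gradx_lip x1 x2 y) z (x - z).
rewrite subrKC -[grad _ _]/(gradx f z y).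
have := dotv_lbound (x - z) (gradx f z y).
have pL_gt0 : 0 < p - L by rewrite subr_gt0.
have := quadratic_lbound (enorm (gradx f z y)) (enorm (x - z)) pL_gt0.
rewrite !sqr_enorm /Kf; lra.
Qed.

Lemma f_le_Kf x y z : f x y <= Kf f p x z y.
Proof.
rewrite /Kf lerDl.
have [->|sq_neq0] := eqVneq (sqnorm (x - z)) 0; first by rewrite mulr0.
(* p >= 0 because the Lipschitz bound at x <> z forces L >= 0 *)
have enorm_gt0 : 0 < enorm (x - z) by rewrite sqrtr_gt0 lt_def sq_neq0 sqnorm_ge0.
have L_ge0 : 0 <= L.
  rewrite -(pmulr_lge0 _ enorm_gt0).
  exact: le_trans (enorm_ge0 _) (gradx_lip x z y).
by apply: mulr_ge0 (sqnorm_ge0 _); rewrite divr_ge0 // (le_trans L_ge0 (ltW L_lt_p)).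
Qed.

Lemma dfun_le_Kf X x y z : X x -> dfun f p X y z <= Kf f p x z y.
Proof.
move=> Xx; apply: ge_inf; last by exists x.
exists (f z y - enorm (gradx f z y) ^+ 2 / (2 * (p - L))).
by move=> _ [x' _ <-]; exact: Kf_lbound.
Qed.

Variable Y : set 'rV[R]_m.
Hypotheses (Y_neq0 : Y !=set0) (Y_compact : compact Y).
Hypothesis fy_diff : forall x y, differentiable (f x) y.

Lemma has_sup_Kf x z : has_sup [set Kf f p x z y | y in Y].
Proof.
apply: compact_has_sup; first by case: Y_neq0 => y Yy; exists (Kf f p x z y), y.
have -> : Kf f p x z = f x \+ cst (p / 2 * sqnorm (x - z)) by [].
apply: continuous_compact => //; apply: continuous_subspaceT => y.
by apply: continuousD; [exact: differentiable_continuous | exact: cst_continuous].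
Qed.

(* Unqualified, [Pfun] is the partial-function structure of mathcomp-classical. *)
Lemma dfun_le_Pfun X y z :
  X !=set0 -> Y y -> dfun f p X y z <= Defs.Pfun f p X Y z.
Proof.
move=> [x0 Xx0] Yy; apply: lb_le_inf.
  by exists (sup [set Kf f p x0 z y' | y' in Y]), x0.
move=> _ [x Xx <-]; apply: le_trans (dfun_le_Kf y z Xx) _.
by apply: sup_upper_bound (has_sup_Kf x z) _ _; exists y.
Qed.

Lemma lb_le_Pfun flow X z : X !=set0 ->
  (forall x, X x -> flow <= sup [set f x y | y in Y]) ->
  flow <= Defs.Pfun f p X Y z.
Proof.
move=> [x0 Xx0] psi_ge; apply: lb_le_inf.
  by exists (sup [set Kf f p x0 z y | y in Y]), x0.
move=> _ [x Xx <-]; apply: le_trans (psi_ge x Xx) _.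
apply: ge_sup; first by case: Y_neq0 => y Yy; exists (f x y), y.
move=> _ [y Yy <-]; apply: le_trans (f_le_Kf x y z) _.
by apply: sup_upper_bound (has_sup_Kf x z) _ _; exists y.
Qed.

Lemma Pfun_le_phifun X x y z :
  X x -> Y y -> Defs.Pfun f p X Y z <= phifun f p X Y x y z.
Proof.
move=> Xx Yy; have := dfun_le_Kf y z Xx.
have := dfun_le_Pfun z (ex_intro _ x Xx) Yy.
rewrite /phifun; lra.
Qed.

End Proximal.

Theorem lemma3 (R : realType) (n m : nat)
  (X : set 'rV[R]_n) (Y : set 'rV[R]_m)
  (f : 'rV[R]_n -> 'rV[R]_m -> R) (L p flow : R)
  (hXne : X !=set0) (hXcl : closed X) (hXcv : convexR X)
  (hYne : Y !=set0) (hYcl : closed Y) (hYcv : convexR Y) (hYcp : compact Y)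
  (hdiff : forall q : 'rV[R]_n * 'rV[R]_m,
      differentiable (fun q' : 'rV[R]_n * 'rV[R]_m => f q'.1 q'.2) q)
  (hcont : forall q : 'rV[R]_n * 'rV[R]_m,
      {for q, continuous (fun q' : 'rV[R]_n * 'rV[R]_m => gradx f q'.1 q'.2)} /\
      {for q, continuous (fun q' : 'rV[R]_n * 'rV[R]_m => grady f q'.1 q'.2)})
  (hconc : forall x y1 y2 t, 0 <= t -> t <= 1 ->
      t * f x y1 + (1 - t) * f x y2 <= f x (t *: y1 + (1 - t) *: y2))
  (hLx : forall x1 y1 x2 y2,
      enorm (gradx f x1 y1 - gradx f x2 y2)
        <= L * Num.sqrt (sqnorm (x1 - x2) + sqnorm (y1 - y2)))
  (hLy : forall x1 y1 x2 y2,
      enorm (grady f x1 y1 - grady f x2 y2)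
        <= L * Num.sqrt (sqnorm (x1 - x2) + sqnorm (y1 - y2)))
  (hpsi : forall x, X x -> flow <= sup [set f x y | y in Y])
  (hpL : L < p) :
  forall x y (z : 'rV[R]_n), X x -> Y y -> flow <= phifun f p X Y x y z.
Proof.
move=> x y z Xx Yy.
have fx_diff x' y' : differentiable (f ^~ y') x'.
  exact: differentiable_sectionl (hdiff (x', y')).
have fy_diff x' y' : differentiable (f x') y'.
  exact: differentiable_sectionr (hdiff (x', y')).
have gradx_lip x1 x2 y' :
    enorm (gradx f x1 y' - gradx f x2 y') <= L * enorm (x1 - x2).
  by have := hLx x1 y' x2 y'; rewrite subrr sqnorm0 addr0.
apply: le_trans (Pfun_le_phifun fx_diff gradx_lip hpL hYne hYcp fy_diff z Xx Yy).
exact (lb_le_Pfun gradx_lip hpL hYne hYcp fy_diff z hXne hpsi).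
Qed.
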